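(* For every positive integer $s$ there exists $q_0=q_0(s)$ such that for every $q\ge q_0$ the complete $(s+1)$-partite graph $K_{q,q,\dots,q}$ (with $s+1$ parts of size $q$) contains $s-1$ pairwise edge-disjoint 2-factors whose union can be oriented so that, for all positive integers $c,d$ with $c+d=s+1$, the union of these oriented 2-factors contains no copy of $K_{c,d}$ in which all arcs are oriented towards the same part.
   Context: A 2-factor of a graph is a spanning 2-regular subgraph. $K_{c,d}$ denotes the complete bipartite graph with parts of sizes $c$ and $d$. *)

From mathcomp Require Import all_boot.
Set Implicit Arguments. Unset Strict Implicit. Unset Printing Implicit Defensive.

Definition mpvert (s q : nat) : finType := ('I_s.+1 * 'I_q)%type.

Definition Kmp_adj (s q : nat) : rel (mpvert s q) := fun u v => u.1 != v.1.

Definition is_two_factor (T : finType) (G F : rel T) : Prop :=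
  [/\ symmetric F, irreflexive F, subrel F G & forall v : T, #|[set w | F v w]| = 2].

Definition pairwise_edge_disjoint (T : finType) (I : finType) (F : I -> rel T) : Prop :=
  forall i j : I, i != j -> forall u v : T, ~~ (F i u v && F j u v).

Definition graph_union (T : finType) (I : finType) (F : I -> rel T) : rel T :=
  fun u v => [exists i, F i u v].

Definition is_orientation (T : finType) (U D : rel T) : Prop :=
  (forall u v, D u v -> U u v) /\
  (forall u v, U u v -> xorb (D u v) (D v u)).

Definition has_uniform_Kcd (T : finType) (D : rel T) (c d : nat) : Prop :=
  exists A B : {set T},
    [/\ [disjoint A & B], #|A| = c, #|B| = d &
        forall a b, a \in A -> b \in B -> D a b].

From mathcomp Require Import all_boot.
From mathcomp Require Import fingroup perm zify.

Set Implicit Arguments.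
Unset Strict Implicit.
Unset Printing Implicit Defensive.

(* The i-th 2-factor (i < s - 1) consists of the edges {u, rot_i u} of the
   permutation rot_i : (p, x) |-> (p + 1, x + 3^i) of Z_(s+1) x Z_q, and the
   orientation sends u to rot_i u.  Since a step changes the part by 1 and there
   are at least 3 parts, no edge is traversed in both directions, so these
   2-factors are edge-disjoint and the orientation is well defined.  Every
   vertex has in- and out-degree at most s - 1, which excludes K_{1,s} and K_{s,1}.  A
   uniformly oriented K_{2,2} on a, a' -> b, b' would give
   3^i + 3^l = 3^j + 3^k (mod q) for the steps a -> b, a' -> b, a -> b',
   a' -> b'; for q >= 2 * 3^(s-1) this is an equation in integers, and as the
   powers of 3 form a Sidon set, either a = a' or b = b'. *)

Section OrdShift.
Variable n : nat.

Definition shift_ord (t : nat) (x : 'I_n) : 'I_n :=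
  Ordinal (ltn_pmod (x + t) (leq_ltn_trans (leq0n x) (ltn_ord x))).

Lemma shift_ord_inj t : injective (shift_ord t).
Proof.
move=> x y /(congr1 val) /= /eqP; rewrite eqn_modDr !modn_small //.
by move/eqP/val_inj.
Qed.

Lemma shift_ord0 x : shift_ord 0 x = x.
Proof. by apply: val_inj; rewrite /= addn0 modn_small. Qed.

Lemma shift_ordD t t' x : shift_ord t (shift_ord t' x) = shift_ord (t' + t) x.
Proof. by apply: val_inj; rewrite /= modnDml addnA. Qed.

Lemma eq_shift_ord t t' x :
  (shift_ord t x == shift_ord t' x) = (t == t' %[mod n]).
Proof. by rewrite -val_eqE /= eqn_modDl. Qed.

Lemma shift_ord_id t x : (shift_ord t x == x) = (n %| t).
Proof. by rewrite -{2}(shift_ord0 x) eq_shift_ord mod0n. Qed.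

Lemma shift_ord_cross x x' ti tj tk tl :
  shift_ord ti x = shift_ord tj x' -> shift_ord tk x = shift_ord tl x' ->
  ti + tl = tj + tk %[mod n].
Proof.
move=> /(congr1 val) /= e1 /(congr1 val) /= e2; apply/eqP.
rewrite -(eqn_modDl (x + x')).
have -> : x + x' + (ti + tl) = (x + ti) + (x' + tl) by lia.
have -> : x + x' + (tj + tk) = (x' + tj) + (x + tk) by lia.
by rewrite -modnDm e1 -e2 modnDm.
Qed.

End OrdShift.

Definition sidon_mod (I : Type) (q : nat) (t : I -> nat) : Prop :=
  forall i j k l, t i + t j = t k + t l %[mod q] ->
    (i = k /\ j = l) \/ (i = l /\ j = k).

Lemma sidon_mod_inj (I : Type) q (t : I -> nat) i j :
  sidon_mod q t -> t i = t j %[mod q] -> i = j.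
Proof.
move=> sidon tij.
have : t i + t i = t j + t j %[mod q] by rewrite -modnDm tij modnDm.
by case/sidon => -[].
Qed.

Lemma expn_sum_lt m a b c : 2 < m -> a <= b < c -> m ^ a + m ^ b < m ^ c.
Proof.
move=> m_gt2 /andP [ab bc].
have : m ^ a <= m ^ b by rewrite leq_pexp2l //; lia.
have : m ^ b.+1 <= m ^ c by rewrite leq_pexp2l //; lia.
have : 0 < m ^ b by rewrite expn_gt0; lia.
rewrite expnS; nia.
Qed.

Lemma expn_sum_sidon m a b c d : 2 < m ->
  m ^ a + m ^ b = m ^ c + m ^ d -> (a = c /\ b = d) \/ (a = d /\ b = c).
Proof.
move=> m_gt2.
wlog ab : a b / a <= b.
  move=> IH; case: (leqP a b) => [|/ltnW ba]; first exact: IH.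
  by rewrite addnC => /IH-/(_ ba) [] []; auto.
wlog cd : c d / c <= d.
  move=> IH; case: (leqP c d) => [|/ltnW dc]; first exact: IH.
  by rewrite [in X in _ = X]addnC => /IH-/(_ dc) [] []; auto.
case: (ltngtP b d) => [bd | db | <-] e.
- by have := expn_sum_lt m_gt2 (introT andP (conj ab bd)); lia.
- by have := expn_sum_lt m_gt2 (introT andP (conj cd db)); lia.
- by left; split => //; apply: (expnI (ltnW m_gt2)); lia.
Qed.

Lemma sidon_mod_expn m q s : 2 < m -> 2 * m ^ s <= q ->
  sidon_mod q (fun i : 'I_s => m ^ i).
Proof.
move=> m_gt2 q_ge i j k l.
have small (x y : 'I_s) : m ^ x + m ^ y < q.
  have : m ^ x < m ^ s by rewrite ltn_exp2l //; lia.
  have : m ^ y < m ^ s by rewrite ltn_exp2l //; lia.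
  lia.
rewrite !modn_small // => /(expn_sum_sidon m_gt2).
by case=> -[/val_inj-> /val_inj->]; auto.
Qed.

Section PermGraph.
Variable T : finType.

Definition perm_graph (g : {perm T}) : rel T := fun u v => (v == g u) || (u == g v).

Lemma perm_graph_sym g : symmetric (perm_graph g).
Proof. by move=> u v; rewrite /perm_graph orbC. Qed.

Lemma perm_graph_nbhd g u : [set v | perm_graph g u v] = [set g u; (g^-1)%g u].
Proof.
apply/setP => v; rewrite !inE /perm_graph; congr orb.
by apply/eqP/eqP => [->|->]; rewrite ?permK ?permKV.
Qed.

Lemma perm_graph_two_factor (G : rel T) (g : {perm T}) :
  irreflexive G -> symmetric G -> (forall u, G u (g u)) ->
  (forall u, g (g u) != u) -> is_two_factor G (perm_graph g).
Proof.
move=> G_irr G_sym G_g no_two_cycle; split.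
- exact: perm_graph_sym.
- move=> u; rewrite /perm_graph orbb; apply/eqP => u_fix.
  by have := G_g u; rewrite -u_fix G_irr.
- by move=> u v /orP [] /eqP ->; rewrite // G_sym.
- move=> u; rewrite perm_graph_nbhd cards2; case: eqP => // e.
  by have := no_two_cycle u; rewrite e permKV eqxx.
Qed.

End PermGraph.

Section PermFamily.
Variables (T I : finType) (g : I -> {perm T}).

Definition perm_digraph : rel T := fun u v => [exists i, v == g i u].

Hypothesis no_two_cycle : forall i j u, g j (g i u) != u.

Lemma perm_graphs_edge_disjoint :
  (forall i j u, g i u = g j u -> i = j) ->
  pairwise_edge_disjoint (fun i => perm_graph (g i)).
Proof.
move=> g_inj i j ij u v; apply/negP => /andP [/orP [] /eqP e1 /orP [] /eqP e2].
- by move: ij; rewrite (g_inj i j u) ?eqxx // -e1 -e2.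
- by have := no_two_cycle i j u; rewrite -e1 -e2 eqxx.
- by have := no_two_cycle j i u; rewrite -e2 -e1 eqxx.
- by move: ij; rewrite (g_inj i j v) ?eqxx // -e1 -e2.
Qed.

Lemma perm_digraph_orientation :
  is_orientation (graph_union (fun i => perm_graph (g i))) perm_digraph.
Proof.
split=> u v.
  by case/existsP=> i e; apply/existsP; exists i; rewrite /perm_graph e.
case/existsP=> i /orP e.
have one_way : ~~ (perm_digraph u v && perm_digraph v u).
  apply/negP => /andP [/existsP [j /eqP ->] /existsP [k /eqP e']].
  by have := no_two_cycle j k u; rewrite -e' eqxx.
have some_way : perm_digraph u v || perm_digraph v u.
  by case: e => e; apply/orP; [left | right]; apply/existsP; exists i.
by move: one_way some_way; case: (perm_digraph u v); case: (perm_digraph v u).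
Qed.

Lemma uniform_K1d_perm_digraph d : has_uniform_Kcd perm_digraph 1 d -> d <= #|I|.
Proof.
case=> A [B [_ /eqP/cards1P [a ->] <- AB]].
apply: leq_trans (leq_imset_card (g^~ a) I); apply: subset_leq_card.
apply/subsetP => b /(AB a b (set11 a)) /existsP [i /eqP ->].
by apply/imsetP; exists i.
Qed.

Lemma uniform_Kc1_perm_digraph c : has_uniform_Kcd perm_digraph c 1 -> c <= #|I|.
Proof.
case=> A [B [_ <- /eqP/cards1P [b ->] AB]].
apply: leq_trans (leq_imset_card (fun i => (g i)^-1%g b) I); apply: subset_leq_card.
apply/subsetP => a /AB /(_ (set11 b)) /existsP [i /eqP ->].
by apply/imsetP; exists i; rewrite ?permK.
Qed.

End PermFamily.

Definition K22_free (T : Type) (D : rel T) : Prop :=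
  forall a a' b b', D a b -> D a' b -> D a b' -> D a' b' -> a = a' \/ b = b'.

Lemma K22_free_no_uniform_Kcd (T : finType) (D : rel T) c d :
  K22_free D -> 1 < c -> 1 < d -> ~ has_uniform_Kcd D c d.
Proof.
move=> D_K22 c_gt1 d_gt1 [A [B [_ cardA cardB AB]]].
have /card_gt1P [a [a' [aA a'A aa']]] : 1 < #|A| by rewrite cardA.
have /card_gt1P [b [b' [bB b'B bb']]] : 1 < #|B| by rewrite cardB.
have [e|e] := D_K22 a a' b b' (AB _ _ aA bB) (AB _ _ a'A bB) (AB _ _ aA b'B)
  (AB _ _ a'A b'B).
- by rewrite e eqxx in aa'.
- by rewrite e eqxx in bb'.
Qed.

Section Rotations.
Variables s q : nat.

Lemma Kmp_adj_irr : irreflexive (@Kmp_adj s q).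
Proof. by move=> u; rewrite /Kmp_adj eqxx. Qed.

Lemma Kmp_adj_sym : symmetric (@Kmp_adj s q).
Proof. by move=> u v; rewrite /Kmp_adj eq_sym. Qed.

Definition rot_fun (t : nat) (u : mpvert s q) : mpvert s q :=
  (shift_ord 1 u.1, shift_ord t u.2).

Lemma rot_fun_inj t : injective (rot_fun t).
Proof.
move=> [a x] [b y] e.
by rewrite (shift_ord_inj (congr1 fst e : shift_ord 1 a = shift_ord 1 b))
  (shift_ord_inj (congr1 snd e : shift_ord t x = shift_ord t y)).
Qed.

Definition rot t : {perm mpvert s q} := perm (@rot_fun_inj t).

Lemma rotE t u : rot t u = (shift_ord 1 u.1, shift_ord t u.2).
Proof. by rewrite permE. Qed.

Lemma Kmp_adj_rot t u : 0 < s -> Kmp_adj u (rot t u).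
Proof. by move=> s_gt0; rewrite /Kmp_adj rotE eq_sym /= shift_ord_id dvdn1 eqSS -lt0n. Qed.

Lemma rot_rot_neq t t' u : 1 < s -> rot t' (rot t u) != u.
Proof.
move=> s_gt1; apply/negP => /eqP /(congr1 fst) /eqP.
rewrite !rotE /= shift_ordD shift_ord_id => /dvdn_leq; lia.
Qed.

Lemma rot_eq_mod t t' u : (rot t u == rot t' u) = (t == t' %[mod q]).
Proof. by rewrite !rotE xpair_eqE eqxx eq_shift_ord. Qed.

Lemma rot_K22_free (I : finType) (t : I -> nat) :
  sidon_mod q t -> K22_free (perm_digraph (fun i => rot (t i))).
Proof.
move=> sidon a a' b b'.
move=> /existsP [i /eqP ei] /existsP [j /eqP ej].
move=> /existsP [k /eqP ek] /existsP [l /eqP el].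
have e1 : shift_ord (t i) a.2 = shift_ord (t j) a'.2.
  by have := congr1 snd (etrans (esym ei) ej); rewrite !rotE.
have e2 : shift_ord (t k) a.2 = shift_ord (t l) a'.2.
  by have := congr1 snd (etrans (esym ek) el); rewrite !rotE.
case: (sidon _ _ _ _ (shift_ord_cross e1 e2)) => -[ij _].
- by left; apply: (@perm_inj _ (rot (t i))); rewrite -ei ej ij.
- by right; rewrite ei ek ij.
Qed.

End Rotations.

Theorem lemma2p3 :
  forall s : nat, 0 < s ->
  exists q0 : nat, forall q : nat, q0 <= q ->
    exists F : 'I_(s - 1) -> rel (mpvert s q),
      (forall i, is_two_factor (@Kmp_adj s q) (F i)) /\
      pairwise_edge_disjoint F /\
      exists D : rel (mpvert s q),
        is_orientation (graph_union F) D /\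
        (forall c d : nat, 0 < c -> 0 < d -> c + d = s.+1 ->
           ~ has_uniform_Kcd D c d).
Proof.
move=> s s_gt0; exists (2 * 3 ^ (s - 1)) => q q_ge.
pose g (i : 'I_(s - 1)) := @rot s q (3 ^ i).
have sidon : sidon_mod q (fun i : 'I_(s - 1) => 3 ^ i) := @sidon_mod_expn 3 q (s - 1) isT q_ge.
have no_two_cycle i j u : g j (g i u) != u.
  by apply: rot_rot_neq; have := ltn_ord i; lia.
exists (fun i => perm_graph (g i)); split; [|split].
- move=> i; apply: perm_graph_two_factor (no_two_cycle i i).
  + exact: Kmp_adj_irr.
  + exact: Kmp_adj_sym.
  + by move=> u; apply: Kmp_adj_rot.
- apply: (perm_graphs_edge_disjoint no_two_cycle) => i j u /eqP.
  by rewrite rot_eq_mod => /eqP /(sidon_mod_inj sidon).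
exists (perm_digraph g); split; first exact: perm_digraph_orientation no_two_cycle.
move=> c d c_gt0 d_gt0 cd.
have [c1 | c_neq1] := eqVneq c 1.
  by rewrite c1 => /uniform_K1d_perm_digraph; rewrite card_ord; lia.
have [d1 | d_neq1] := eqVneq d 1.
  by rewrite d1 => /uniform_Kc1_perm_digraph; rewrite card_ord; lia.
by apply: K22_free_no_uniform_Kcd (rot_K22_free sidon) _ _; lia.
Qed.
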